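(* Let $n\ge1$ and let $\kappa(n):=\|e_1\vee\cdots\vee e_n\|_{\pi s+,\ell_1}$. Then $\kappa(n)=\|e_1\vee\cdots\vee e_n\|_{\pi s+,\ell_1^n}$, and for every $m$ with $n\le m\le\infty$ we have $c_{\pi,s+}(n,\ell_1^m)=\kappa(n)$. Furthermore, $$\sup_E\frac{c_{\pi,s+}(n,E)}{c_+(E)^n}=\sup_{E:\,c_+(E)=1}c_{\pi,s+}(n,E)=c_{\pi,s+}(n,\ell_1)=c_{\pi,s+}(n,\ell_1^n)=\kappa(n),$$ where the suprema are over all ordered normed spaces $E$.
   Context: All vector spaces are real. An ordered normed space is a real normed space $E$ together with a closed convex cone $E_+\subseteq E$ (positive elements) such that $E=E_+-E_+$ and such that, writing $\|x\|_+:=\inf\{\|y\|+\|z\|: x=y-z,\ y,z\in E_+\}$, the constant $c_+(E):=\sup\{\|x\|_+:\|x\|\le1\}$ is finite. $E^{\otimes n}$ is the algebraic $n$-th tensor power, $E^{\vee n}$ the subspace of symmetric tensors, $x^{\otimes n}:=x\otimes\cdots\otimes x$, and $x_1\vee\cdots\vee x_n:=\frac1{n!}\sum_{\sigma\in\mathfrak S_n}x_{\sigma(1)}\otimes\cdots\otimes x_{\sigma(n)}$. Norms: $\|\mathbf{x}\|_{\pi,E}:=\inf\{\sum_k|a_k|\,\|x_{1k}\|\cdots\|x_{nk}\| : \mathbf{x}=\sum_k a_k x_{1k}\otimes\cdots\otimes x_{nk}\}$ and $\|\mathbf{x}\|_{\pi s+,E}:=\inf\{\sum_k|a_k|\,\|x_k\|^n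 : \mathbf{x}=\sum_k a_k x_k^{\otimes n},\ x_k\in E_+\}$ (finite sums, $a_k\in\mathbb{R}$). The positive polarization constant is $c_{\pi,s+}(n,E):=\sup\{\|\mathbf{x}\|_{\pi s+,E}/\|\mathbf{x}\|_{\pi,E}:0\ne\mathbf{x}\in E^{\vee n}\}$. For $1\le m<\infty$, $\ell_1^m$ is $\mathbb{R}^m$ with the $\ell_1$-norm, $\ell_1^\infty=\ell_1$, both ordered coordinatewise (positive cone = vectors with nonnegative coordinates); $(e_i)$ is the standard basis. *)

From HB Require Import structures.
From mathcomp Require Import all_boot all_order all_algebra all_fingroup.
From mathcomp Require Import all_classical all_reals.
From mathcomp Require Import ereal topology normedtype sequences.
Set Implicit Arguments. Unset Strict Implicit. Unset Printing Implicit Defensive.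
Import Order.TTheory GRing.Theory Num.Theory.
Import numFieldTopology.Exports numFieldNormedType.Exports.
Local Open Scope ring_scope.
Local Open Scope classical_set_scope.

Section L1.
Variable R : realType.
Definition l1pred : {pred (nat -> R^o)} :=
  fun u => `[< exists M : R, forall N, \sum_(k < N) `|u k| <= M >].
Lemma l1pred_submod : GRing.submod_closed l1pred.
Proof.
split.
  apply/asboolP; exists 0 => N; rewrite big1 // => k _; by rewrite normr0.
move=> a u v /asboolP [M1 H1] /asboolP [M2 H2]; apply/asboolP.
exists (`|a| * M1 + M2) => N.
apply: (le_trans (y := \sum_(k < N) (`|a| * `|u k| + `|v k|))).
  apply: ler_sum => k _.
  rewrite !fctE.
  by apply: (le_trans (ler_normD _ _)); rewrite normrM.
rewrite big_split /= -mulr_sumr; apply: lerD => //.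
have h1 := H1 N; have ha : (0:R) <= `|a| := normr_ge0 a.
by apply: ler_wpM2l.
exact: H2.
Qed.

HB.instance Definition _ := GRing.isSubmodClosed.Build R (nat -> R^o) l1pred
  l1pred_submod.

Record l1 := L1 { l1val : nat -> R^o; l1valP : l1val \in l1pred }.
HB.instance Definition _ := [isSub for l1val].
HB.instance Definition _ := [Choice of l1 by <:].
HB.instance Definition _ := [SubChoice_isSubLmodule of l1 by <:].

Lemma l1e_subproof (i : nat) : (fun k : nat => (((k == i)%N)%:R : R^o)) \in l1pred.
Proof.
apply/asboolP; exists 1 => N.
have -> : \sum_(k < N) `|((k == i :> nat)%:R : R)| = ((i < N)%N%:R : R).
  elim: N => [|N IH]; first by rewrite big_ord0.
  rewrite big_ord_recr /= IH normr_nat ltnS.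
  by case: (ltngtP i N) => _ /=; rewrite ?addr0 ?add0r.
by case: (i < N)%N.
Qed.

(** the standard unit vector e_i of l_1 (indices starting at 0) *)
Definition l1e (i : nat) : l1 := L1 (l1e_subproof i).
Definition l1norm (u : l1) : R := limn (series (fun k => `|l1val u k| : R)).
Definition l1pos : set l1 := [set u | forall k, 0 <= l1val u k].

(** l_1^m, realised on row vectors 'rV[R]_m *)
Definition l1n_norm (m : nat) (v : 'rV[R]_m) : R := \sum_(j < m) `|v ord0 j|.
Definition l1n_pos (m : nat) : set 'rV[R]_m := [set v | forall j, 0 <= v ord0 j].
Definition l1n_e (m : nat) (i : 'I_m) : 'rV[R]_m := delta_mx ord0 i.
End L1.


Section Tensors.
Variable R : realType.
Variable V : lmodType R.

Definition fupd (n : nat) (f : 'I_n -> V) (i : 'I_n) (x : V) : 'I_n -> V :=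
  fun j => if j == i then x else f j.

Definition multilinear (n : nat) (phi : ('I_n -> V) -> R) : Prop :=
  forall (f : 'I_n -> V) (i : 'I_n) (a : R) (x y : V),
    phi (fupd f i (a *: x + y)) = a * phi (fupd f i x) + phi (fupd f i y).

(** A finite formal sum  sum_k a_k x_{1k} (x) ... (x) x_{nk}  of elementary tensors *)
Definition trep (n : nat) := seq (R * ('I_n -> V)).

Definition teval (n : nat) (phi : ('I_n -> V) -> R) (r : trep n) : R :=
  (\sum_(p <- r) p.1 * phi p.2)%R.

(** Two formal sums denote the same element of the algebraic tensor power
    V^{(x) n} iff they agree on every n-linear form (universal property). *)
Definition teq (n : nat) (r s : trep n) : Prop :=
  forall phi, multilinear phi -> teval phi r = teval phi s.

Definition tsymmetric (n : nat) (r : trep n) : Prop :=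
  forall s : 'S_n, teq [seq (p.1, fun i => p.2 (s i)) | p <- r] r.

(** x_1 v ... v x_n = (1/n!) sum_sigma x_{sigma 1} (x) ... (x) x_{sigma n} *)
Definition symprod (n : nat) (x : 'I_n -> V) : trep n :=
  [seq ((n`!%:R)^-1, fun i => x (s i)) | s : 'S_n].

Definition powrep (n : nat) (s : seq (R * V)) : trep n :=
  [seq (p.1, fun _ : 'I_n => p.2) | p <- s].

Variable N : V -> R.
Variable P : set V.

Definition norm_pi (n : nat) (x : trep n) : \bar R :=
  ereal_inf [set ((\sum_(p <- r) `|p.1| * \prod_(i < n) N (p.2 i))%R)%:E
            | r in [set r : trep n | teq r x]].

Definition norm_pisp (n : nat) (x : trep n) : \bar R :=
  ereal_inf [set ((\sum_(p <- s) `|p.1| * N p.2 ^+ n)%R)%:E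
            | s in [set s : seq (R * V) | (forall p, p \in s -> P p.2)
                                          /\ teq (powrep n s) x]].

Definition c_pisp (n : nat) : \bar R :=
  ereal_sup [set (norm_pisp x * ((fine (norm_pi x))^-1)%:E)%E
            | x in [set x : trep n | tsymmetric x /\ ~ teq x [::]]].

Definition norm_plus (x : V) : \bar R :=
  ereal_inf [set (N y.1 + N y.2)%:E
            | y in [set y : V * V | P y.1 /\ P y.2 /\ x = (y.1 - y.2)%R]].
Definition c_plus : \bar R :=
  ereal_sup [set norm_plus x | x in [set x | (N x <= 1)%R]].

Definition ordered_normed_space : Prop :=
  (forall x y, N (x + y) <= N x + N y) /\
  (forall (a : R) x, N (a *: x) = `|a| * N x) /\
  (forall x, N x = 0 -> x = 0) /\
  (forall x y, P x -> P y -> P (x + y)) /\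
  (forall (a : R) x, 0 <= a -> P x -> P (a *: x)) /\
  (forall x, P x -> P (- x) -> x = 0) /\
  (forall (u : nat -> V) (x : V), (forall k, P (u k)) ->
      (fun k => N (u k - x)) @ \oo --> (0 : R) -> P x) /\
  (forall x, exists y z, [/\ P y, P z & x = y - z]) /\
  (c_plus < +oo)%E.
End Tensors.

Section Main.
Variable R : realType.

Definition kappa (n : nat) : \bar R :=
  norm_pisp (@l1norm R) (@l1pos R) (symprod (fun i : 'I_n => l1e R i)).

Definition sup_ratio (n : nat) : \bar R :=
  ereal_sup [set r | exists (V : lmodType R) (N : V -> R) (P : set V),
     ordered_normed_space N P /\
     r = (c_pisp N P n * (((fine (c_plus N P)) ^+ n)^-1)%:E)%E].

Definition sup_cplus1 (n : nat) : \bar R :=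
  ereal_sup [set r | exists (V : lmodType R) (N : V -> R) (P : set V),
     [/\ ordered_normed_space N P, c_plus N P = 1%E & r = c_pisp N P n]].
End Main.

From HB Require Import structures.
From mathcomp Require Import all_boot all_order all_algebra all_fingroup.
From mathcomp Require Import all_classical all_reals.
From mathcomp Require Import ereal topology normedtype sequences numfun realfun.
From mathcomp Require Import ring lra.
Import Order.TTheory GRing.Theory Num.Theory.
Import numFieldTopology.Exports numFieldNormedType.Exports.
Set Implicit Arguments. Unset Strict Implicit. Unset Printing Implicit Defensive.
Local Open Scope ring_scope.
Local Open Scope classical_set_scope.

(* For positive x_1, ..., x_n of E, the map w |-> sum_i (w_i / ||x_i||) x_i
   is a positive contraction from l_1 to E sending e_i to x_i / ||x_i||, so it carries any
   positive representation of e_1 v ... v e_n to one of x_1 v ... v x_n of cost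
   kappa(n) ||x_1|| ... ||x_n||.  Writing every x_i = y_i - z_i with y_i, z_i positive and
   ||y_i|| + ||z_i|| <= c ||x_i|| for c > c_+(E), and expanding multilinearly, extends
   this to arbitrary x_i at the price c^n; symmetrizing a projective representation of a
   symmetric tensor then gives c_{pi,s+}(n, E) <= kappa(n) c_+(E)^n. On l_1^m (m >= n) the permanent of the matrix of the first n coordinates
   of x_1, ..., x_n is a multilinear form bounded by ||x_1|| ... ||x_n|| and equal to 1 on
   e_1 v ... v e_n, so this tensor has projective norm 1.  Truncation l_1 -> l_1^m and
   extension l_1^m -> l_1 are positive contractions, so kappa(n) is the same in l_1^m;
   finally l_1^n is an ordered normed space with c_+ = 1. *)

Section Multilinear.
Variables (R : realType) (V : lmodType R) (n : nat).
Implicit Types (f h : 'I_n -> V) (phi : ('I_n -> V) -> R).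

Lemma fupd_eq f i x : fupd f i x i = x.
Proof. by rewrite /fupd eqxx. Qed.

Lemma fupd_neq f i j x : j != i -> fupd f i x j = f j.
Proof. by rewrite /fupd => /negbTE ->. Qed.

Lemma fupd_id f i : fupd f i (f i) = f.
Proof. by apply: funext => j; rewrite /fupd; case: eqP => // ->. Qed.

Lemma fupd_perm f (s : 'S_n) i x :
  (fun j => fupd f i x (s j)) = fupd (fun j => f (s j)) (s^-1 i)%g x.
Proof. by apply: funext => j; rewrite /fupd -{1}(permKV s i) (inj_eq (@perm_inj _ s)). Qed.

Lemma multilinear_perm phi (s : 'S_n) :
  multilinear phi -> multilinear (fun f => phi (fun j => f (s j))).
Proof. by move=> phi_ml f i a x y /=; rewrite !fupd_perm; apply: phi_ml. Qed.

Section Form.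
Variable phi : ('I_n -> V) -> R.
Hypothesis phi_ml : multilinear phi.

Lemma multilinearD f i x y :
  phi (fupd f i (x + y)) = phi (fupd f i x) + phi (fupd f i y).
Proof. by rewrite -{1}[x]scale1r phi_ml mul1r. Qed.

Lemma multilinear0 f i : phi (fupd f i 0) = 0.
Proof. by apply: (@addrI _ (phi (fupd f i 0))); rewrite -multilinearD !addr0. Qed.

Lemma multilinearZ f i a x : phi (fupd f i (a *: x)) = a * phi (fupd f i x).
Proof. by rewrite -[a *: x]addr0 phi_ml multilinear0 addr0. Qed.

Lemma multilinearB f i x y :
  phi (fupd f i (x - y)) = phi (fupd f i x) - phi (fupd f i y).
Proof. by rewrite multilinearD -scaleN1r multilinearZ mulN1r. Qed.

Lemma multilinear_eq0 f i : f i = 0 -> phi f = 0.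
Proof. by move=> fi0; rewrite -(fupd_id f i) fi0 multilinear0. Qed.

Lemma multilinear_scale (c : 'I_n -> R) h :
  phi (fun i => c i *: h i) = (\prod_i c i) * phi h.
Proof.
pose g (s : seq 'I_n) i := if i \in s then c i *: h i else h i.
suff gE s : uniq s -> phi (g s) = (\prod_(i <- s) c i) * phi h.
  by rewrite -big_enum -gE ?enum_uniq //; congr phi; apply: funext => i; rewrite /g mem_enum.
elim: s => [_|a s IH /andP [a_s /IH {}IH]]; first by rewrite big_nil mul1r.
have gaE : g s a = h a by rewrite /g (negbTE a_s).
have -> : g (a :: s) = fupd (g s) a (c a *: h a).
  by apply: funext => i; rewrite /fupd /g in_cons; case: eqVneq => [->|].
by rewrite multilinearZ -gaE fupd_id IH big_cons mulrA.
Qed.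

End Form.
End Multilinear.

Section FormalTensors.
Variables (R : realType) (V : lmodType R) (n : nat).
Implicit Types (r s : trep V n) (phi : ('I_n -> V) -> R) (f u : 'I_n -> V).

Definition tscale (a : R) r : trep V n := [seq (a * p.1, p.2) | p <- r].

Lemma teval_cat phi r s : teval phi (r ++ s) = teval phi r + teval phi s.
Proof. by rewrite /teval big_cat. Qed.

Lemma teval_scale phi a r : teval phi (tscale a r) = a * teval phi r.
Proof. by rewrite /teval big_map mulr_sumr; apply: eq_bigr => p _; rewrite mulrA. Qed.

Lemma teval_symprod phi f :
  teval phi (symprod f) = (n`!%:R)^-1 * \sum_(s : 'S_n) phi (fun i => f (s i)).
Proof. by rewrite /teval /symprod big_map mulr_sumr big_enum. Qed.

Lemma teval_perm phi (s : 'S_n) r :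
  teval phi [seq (p.1, fun i => p.2 (s i)) | p <- r] =
  teval (fun f => phi (fun i => f (s i))) r.
Proof. by rewrite /teval big_map. Qed.

Lemma teq_sym r s : teq r s -> teq s r.
Proof. by move=> rs phi phi_ml; rewrite rs. Qed.

Lemma teq_trans r s t : teq r s -> teq s t -> teq r t.
Proof. by move=> rs st phi phi_ml; rewrite rs // st. Qed.

Lemma teq_cat r r' s s' : teq r r' -> teq s s' -> teq (r ++ s) (r' ++ s').
Proof. by move=> rr ss phi phi_ml; rewrite !teval_cat rr // ss. Qed.

Lemma teq_scale a r s : teq r s -> teq (tscale a r) (tscale a s).
Proof. by move=> rs phi phi_ml; rewrite !teval_scale rs. Qed.

Lemma tscaleK (a : R) r : a != 0 -> teq (tscale a^-1 (tscale a r)) r.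
Proof. by move=> a0 phi _; rewrite !teval_scale mulrA mulVf // mul1r. Qed.

Lemma perm_mean_cst (x : R) : (n`!%:R)^-1 * \sum_(s : 'S_n) x = x.
Proof.
by rewrite sumr_const card_Sn -[x *+ _]mulr_natl mulKf // pnatr_eq0 -lt0n fact_gt0.
Qed.

Lemma symprod_sym f : tsymmetric (symprod f).
Proof.
move=> s phi phi_ml; rewrite teval_perm !teval_symprod; congr (_ * _).
rewrite [RHS](reindex_inj (mulgI s)); apply: eq_bigr => t _.
by congr phi; apply: funext => i; rewrite permM.
Qed.

Lemma symprod_eq0 f i : f i = 0 -> teq (symprod f) [::].
Proof.
move=> fi0 phi phi_ml; rewrite teval_symprod /teval big_nil big1 ?mulr0 // => s _.
by apply: (multilinear_eq0 phi_ml (i := (s^-1)%g i)); rewrite permKV.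
Qed.

Lemma symprodZ (d : 'I_n -> R) u :
  teq (symprod (fun i => d i *: u i)) (tscale (\prod_i d i) (symprod u)).
Proof.
move=> phi phi_ml; rewrite teval_scale !teval_symprod mulrCA; congr (_ * _); rewrite mulr_sumr.
apply: eq_bigr => s _; rewrite (multilinear_scale phi_ml (fun i => d (s i))).
by rewrite [X in _ = X * _](reindex_inj (@perm_inj _ s)).
Qed.

Lemma symprodB f i y z : f i = y - z ->
  teq (symprod (fupd f i y) ++ tscale (-1) (symprod (fupd f i z))) (symprod f).
Proof.
move=> fiE phi phi_ml; rewrite teval_cat teval_scale !teval_symprod.
rewrite mulN1r -mulrN -mulrDr -sumrN -big_split; congr (_ * _); apply: eq_bigr => s _ /=.
by rewrite !fupd_perm -multilinearB // -fiE -fupd_perm fupd_id.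
Qed.

Definition tsymmetrize r : trep V n := flatten [seq tscale p.1 (symprod p.2) | p <- r].

Lemma teval_tsymmetrize phi r :
  teval phi (tsymmetrize r) = \sum_(p <- r) p.1 * teval phi (symprod p.2).
Proof.
elim: r => [|p r IH]; first by rewrite big_nil /teval big_nil.
by rewrite /tsymmetrize /= teval_cat teval_scale -/(tsymmetrize r) IH big_cons.
Qed.

Lemma teq_tsymmetrize r x : tsymmetric x -> teq r x -> teq (tsymmetrize r) x.
Proof.
move=> x_sym rx phi phi_ml; rewrite teval_tsymmetrize.
under eq_bigr => p _ do rewrite teval_symprod mulrCA mulr_sumr.
rewrite -mulr_sumr exchange_big /= -[RHS]perm_mean_cst; congr (_ * _); apply: eq_bigr => s _.
by rewrite -(x_sym s phi phi_ml) teval_perm -(rx _ (multilinear_perm s phi_ml)).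
Qed.

End FormalTensors.

Section LinearImage.
Variables (R : realType) (V W : lmodType R) (T : V -> W).
Hypothesis T_lin : forall a x y, T (a *: x + y) = a *: T x + T y.

Definition tmap n (r : trep V n) : trep W n := [seq (p.1, fun i => T (p.2 i)) | p <- r].

Lemma multilinear_comp n (phi : ('I_n -> W) -> R) :
  multilinear phi -> multilinear (fun f => phi (fun j => T (f j))).
Proof.
move=> phi_ml f i a x y /=.
have fupdT z : (fun j => T (fupd f i z j)) = fupd (fun j => T (f j)) i (T z).
  by apply: funext => j; rewrite /fupd; case: ifP.
by rewrite !fupdT T_lin phi_ml.
Qed.

Lemma teq_tmap n (r s : trep V n) : teq r s -> teq (tmap r) (tmap s).
Proof.
by move=> rs phi phi_ml; rewrite /teval !big_map; apply: rs (multilinear_comp phi_ml).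
Qed.

Lemma tmap_symprod n (f : 'I_n -> V) : tmap (symprod f) = symprod (fun i => T (f i)).
Proof. by rewrite /tmap /symprod -map_comp. Qed.

Lemma tmap_powrep n (s : seq (R * V)) :
  tmap (powrep n s) = powrep n [seq (p.1, T p.2) | p <- s].
Proof. by rewrite /tmap /powrep -!map_comp. Qed.

End LinearImage.

Section Seminorm.
Variables (R : realType) (V : lmodType R) (N : V -> R).
Hypothesis N_tri : forall x y, N (x + y) <= N x + N y.
Hypothesis N_hom : forall (a : R) x, N (a *: x) = `|a| * N x.

Lemma seminorm0 : N 0 = 0.
Proof. by rewrite -(scale0r (0 : V)) N_hom normr0 mul0r. Qed.

Lemma seminormN x : N (- x) = N x.
Proof. by rewrite -scaleN1r N_hom normrN normr1 mul1r. Qed.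

Lemma seminorm_ge0 x : 0 <= N x.
Proof. by have := N_tri x (- x); rewrite subrr seminorm0 seminormN; lra. Qed.

Lemma seminorm_sum (I : finType) (F : I -> V) : N (\sum_i F i) <= \sum_i N (F i).
Proof.
elim/big_ind2: _ => [|x1 x2 y1 y2 le1 le2|//]; first by rewrite seminorm0.
exact: le_trans (N_tri _ _) (lerD le1 le2).
Qed.

End Seminorm.

Section PositiveRepresentations.
Variables (R : realType) (V : lmodType R) (N : V -> R) (P : set V) (n : nat).
Implicit Types (x : trep V n) (s : seq (R * V)).

Definition pisp_cost s : R := \sum_(p <- s) `|p.1| * N p.2 ^+ n.

Definition pi_cost x : R := \sum_(p <- x) `|p.1| * \prod_i N (p.2 i).

Definition posrep x (B : R) : Prop :=
  exists s, [/\ forall p, p \in s -> P p.2, teq (powrep n s) x & pisp_cost s <= B].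

Lemma norm_pisp_le x B : posrep x B -> (norm_pisp N P x <= B%:E)%E.
Proof. by move=> [s [sP sx sB]]; apply: ge_ereal_inf; exists (pisp_cost s)%:E => //; exists s. Qed.

Lemma posrep_of_norm_pisp_lt x B : (norm_pisp N P x < B%:E)%E -> posrep x B.
Proof. by move/ereal_inf_lt => [_ [s [sP sx] <-]]; rewrite lte_fin => /ltW; exists s. Qed.

Lemma pi_cost_of_norm_pi_lt x B :
  (norm_pi N x < B%:E)%E -> exists2 r, teq r x & pi_cost r <= B.
Proof. by move/ereal_inf_lt => [_ [r rx <-]]; rewrite lte_fin => /ltW; exists r. Qed.

Lemma posrep_teq x y B : teq y x -> posrep y B -> posrep x B.
Proof. by move=> yx [s [sP sy sB]]; exists s; split => //; apply: teq_trans yx. Qed.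

Lemma posrep_le x B B' : B <= B' -> posrep x B -> posrep x B'.
Proof. by move=> BB' [s [sP sx sB]]; exists s; split => //; apply: le_trans BB'. Qed.

Lemma posrep_nil : posrep [::] 0.
Proof. by exists [::]; split => //; rewrite /pisp_cost big_nil. Qed.

Lemma posrep_cat x y B C : posrep x B -> posrep y C -> posrep (x ++ y) (B + C).
Proof.
move=> [s [sP sx sB]] [t [tP ty tC]]; exists (s ++ t); split.
- by move=> p; rewrite mem_cat => /orP [/sP|/tP].
- by rewrite /powrep map_cat; apply: teq_cat.
- by rewrite /pisp_cost big_cat lerD.
Qed.

Lemma posrep_scale x a B : posrep x B -> posrep (tscale a x) (`|a| * B).
Proof.
move=> [s [sP sx sB]]; exists [seq (a * p.1, p.2) | p <- s]; split.
- by move=> p /mapP [q /sP qP ->].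
- have -> : powrep n [seq (a * p.1, p.2) | p <- s] = tscale a (powrep n s).
    by rewrite /powrep /tscale -!map_comp.
  exact: teq_scale.
- rewrite /pisp_cost big_map; under eq_bigr do rewrite normrM -mulrA.
  by rewrite -mulr_sumr ler_wpM2l.
Qed.

Lemma posrep_tsymmetrize r (B : ('I_n -> V) -> R) :
  (forall f, posrep (symprod f) (B f)) ->
  posrep (tsymmetrize r) (\sum_(p <- r) `|p.1| * B p.2).
Proof.
move=> symB; elim: r => [|p r IH]; first by rewrite big_nil; apply: posrep_nil.
by rewrite big_cons; apply: posrep_cat (posrep_scale _ (symB _)) IH.
Qed.

Hypothesis N_ge0 : forall v, 0 <= N v.

Lemma norm_pisp_ge0 x : (0 <= norm_pisp N P x)%E.
Proof.
apply/ereal_infP => _ [s _ <-]; rewrite lee_fin.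
by apply: sumr_ge0 => p _; rewrite mulr_ge0 ?exprn_ge0.
Qed.

Lemma norm_piE x : exists2 p, 0 <= p & norm_pi N x = p%:E.
Proof.
have pi_ge0 r : 0 <= pi_cost r by apply: sumr_ge0 => p _; rewrite mulr_ge0 ?prodr_ge0.
have : (0 <= norm_pi N x)%E by apply/ereal_infP => _ [r _ <-]; exact: pi_ge0.
have : (norm_pi N x <= (pi_cost x)%:E)%E.
  by apply: ge_ereal_inf; exists (pi_cost x)%:E => //; exists x.
by case: (norm_pi N x) => [p| |] //= _; rewrite lee_fin; exists p.
Qed.

End PositiveRepresentations.

Section PositiveContraction.
Variables (R : realType) (V W : lmodType R) (N : V -> R) (P : set V).
Variables (N' : W -> R) (P' : set W) (T : V -> W).
Hypothesis T_lin : forall a x y, T (a *: x + y) = a *: T x + T y.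
Hypothesis T_pos : forall x, P x -> P' (T x).
Hypothesis T_contr : forall x, N' (T x) <= N x.
Hypothesis N'_ge0 : forall y, 0 <= N' y.

Lemma posrep_tmap n (x : trep V n) B : posrep N P x B -> posrep N' P' (tmap T x) B.
Proof.
move=> [s [sP sx sB]]; exists [seq (p.1, T p.2) | p <- s]; split.
- by move=> p /mapP [q /sP qP ->]; apply: T_pos.
- by rewrite -tmap_powrep; apply: teq_tmap.
- apply: le_trans sB; rewrite /pisp_cost big_map; apply: ler_sum => p _.
  rewrite ler_wpM2l // lerXn2r ?nnegrE ?N'_ge0 ?T_contr //.
  exact: le_trans (N'_ge0 _) (T_contr _).
Qed.

Lemma norm_pisp_tmap n (x : trep V n) : (norm_pisp N' P' (tmap T x) <= norm_pisp N P x)%E.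
Proof.
apply/ereal_infP => _ [s [sP sx] <-]; apply: norm_pisp_le.
by apply: posrep_tmap; exists s.
Qed.

End PositiveContraction.

Lemma lee_cvgr (R : realType) T (F : set_system T) {FF : ProperFilter F}
    (f : T -> R) (l : R) (a : \bar R) :
  f @ F --> l -> (\forall t \near F, a <= (f t)%:E)%E -> (a <= l%:E)%E.
Proof.
move=> fl; case: a => [a| |] a_le; last exact: leNye.
  by rewrite lee_fin; apply: (cvgr_to_ge fl); apply: filterS a_le => t; rewrite lee_fin.
by have [t] := filter_ex a_le.
Qed.

Definition decomposable (R : realType) (V : lmodType R) (N : V -> R) (P : set V) (c : R) :=
  forall x, exists y z, [/\ P y, P z, x = y - z & N y + N z <= c * N x].

Section UpperBound.
Variables (R : realType) (V : lmodType R) (N : V -> R) (P : set V) (n : nat).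
Hypothesis N_tri : forall x y, N (x + y) <= N x + N y.
Hypothesis N_hom : forall (a : R) x, N (a *: x) = `|a| * N x.
Hypothesis N_def : forall x, N x = 0 -> x = 0.
Hypothesis P_add : forall x y, P x -> P y -> P (x + y).
Hypothesis P_scale : forall (a : R) x, 0 <= a -> P x -> P (a *: x).
Hypothesis P_0 : P 0.

Variables (U : lmodType R) (NU : U -> R) (PU : set U).
Variables (e : 'I_n -> U) (ell : 'I_n -> U -> R).
Hypothesis ell_lin : forall j a x y, ell j (a *: x + y) = a * ell j x + ell j y.
Hypothesis ell_e : forall i j, ell j (e i) = (i == j)%:R.
Hypothesis ell_pos : forall j w, PU w -> 0 <= ell j w.
Hypothesis ell_norm : forall w, \sum_j `|ell j w| <= NU w.

Let N_ge0 := seminorm_ge0 N_tri N_hom.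
Let NU_ge0 w : 0 <= NU w := le_trans (sumr_ge0 _ (fun j _ => normr_ge0 (ell j w))) (ell_norm w).

Section FixedCost.
Variable K : R.
Hypothesis posrep_e : posrep NU PU (symprod e) K.

Let K_ge0 : 0 <= K.
Proof.
have [s [_ _ sK]] := posrep_e; apply: le_trans sK; apply: sumr_ge0 => p _.
by rewrite mulr_ge0 ?exprn_ge0.
Qed.

Lemma posrep_symprod_pos (u : 'I_n -> V) :
  (forall i, P (u i)) -> posrep N P (symprod u) (K * \prod_i N (u i)).
Proof.
move=> u_pos; have [[i ui0]|u_nz] := pselect (exists i, N (u i) = 0).
  rewrite (bigD1 i) //= ui0 mul0r mulr0.
  exact: posrep_teq (teq_sym (symprod_eq0 (N_def ui0))) (@posrep_nil _ _ N P n).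
have Nu_gt0 i : 0 < N (u i) by rewrite lt_def N_ge0 andbT; apply/eqP => ui0; apply: u_nz; exists i.
pose d i := (N (u i))^-1.
pose T w := \sum_i (ell i w * d i) *: u i.
have T_lin a x y : T (a *: x + y) = a *: T x + T y.
  rewrite /T scaler_sumr -big_split; apply: eq_bigr => i _ /=.
  by rewrite ell_lin scalerA -scalerDl mulrDl mulrA.
have T_e j : T (e j) = d j *: u j.
  rewrite /T (bigD1 j) //= ell_e eqxx mul1r big1 ?addr0 // => i ij.
  by rewrite ell_e eq_sym (negbTE ij) mul0r scale0r.
have T_pos w : PU w -> P (T w).
  move=> w_pos; apply: big_ind => // i _.
  by apply: P_scale => //; rewrite mulr_ge0 ?invr_ge0 ?N_ge0 ?ell_pos.
have T_contr w : N (T w) <= NU w.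
  apply: le_trans (seminorm_sum N_tri N_hom (fun i => (ell i w * d i) *: u i)) _.
  apply: le_trans (ell_norm w).
  apply: ler_sum => i _; rewrite N_hom normrM [`|d i|]ger0_norm ?invr_ge0 ?N_ge0 //.
  by rewrite -mulrA mulVf ?mulr1 // gt_eqF.
have := posrep_scale (\prod_i d i)^-1 (posrep_tmap T_lin T_pos T_contr N_ge0 posrep_e).
rewrite tmap_symprod (_ : (fun i => T (e i)) = fun i => d i *: u i); last exact: funext.
have prod_d : \prod_i d i = (\prod_i N (u i))^-1 by rewrite prodfV.
rewrite prod_d invrK ger0_norm ?prodr_ge0 // mulrC; apply: posrep_teq.
apply: teq_trans (teq_scale _ (symprodZ _ _)) _.
rewrite prod_d -[X in tscale X]invrK; apply: tscaleK.
by rewrite invr_eq0; apply/prodf_neq0 => i _; rewrite gt_eqF.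
Qed.

Lemma posrep_symprodB (y z : 'I_n -> V) : (forall i, P (y i)) -> (forall i, P (z i)) ->
  posrep N P (symprod (fun i => y i - z i)) (K * \prod_i (N (y i) + N (z i))).
Proof.
move=> y_pos z_pos.
pose g (s : seq 'I_n) (y : 'I_n -> V) i := if i \in s then y i - z i else y i.
pose cost (s : seq 'I_n) (y : 'I_n -> V) :=
  K * \prod_i (if i \in s then N (y i) + N (z i) else N (y i)).
suff gE s : uniq s -> forall y, (forall i, P (y i)) -> posrep N P (symprod (g s y)) (cost s y).
  have := gE _ (enum_uniq 'I_n) y y_pos; rewrite /g /cost.
  by under eq_fun do rewrite mem_enum; under eq_bigr do rewrite mem_enum.
elim: s => [_ {y_pos}y y_pos|a s IH /andP [a_s /IH {}IH] {y_pos}y y_pos].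
  by rewrite /cost /g; apply: posrep_symprod_pos.
have y'_pos i : P (fupd y a (z a) i) by rewrite /fupd; case: eqP.
have gE y' : fupd (g (a :: s) y') a (y' a) = g s y'.
  by apply: funext => i; rewrite /fupd /g in_cons; case: eqVneq => [->|]; rewrite ?(negbTE a_s).
apply: posrep_teq (symprodB (i := a) (y := y a) (z := z a) _) _; first by rewrite /g mem_head.
have gE' : fupd (g (a :: s) y) a (z a) = g s (fupd y a (z a)).
  apply: funext => i; rewrite /fupd /g in_cons.
  by case: eqVneq => [->|]; rewrite ?(negbTE a_s) ?eqxx.
rewrite gE gE'; apply: posrep_le (posrep_cat (IH y y_pos) (posrep_scale (-1) (IH _ y'_pos))).
rewrite /cost normrN normr1 mul1r -mulrDr ler_wpM2l //.
rewrite [X in X + _](bigD1 a) // [X in _ + X](bigD1 a) // [X in _ <= X](bigD1 a) //=.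
have rest_y'E : \prod_(i | i != a) (if i \in s then N (fupd y a (z a) i) + N (z i)
    else N (fupd y a (z a) i)) = \prod_(i | i != a) (if i \in s then N (y i) + N (z i) else N (y i)).
  by apply: eq_bigr => i ia; rewrite fupd_neq.
rewrite fupd_eq mem_head (negbTE a_s) rest_y'E -mulrDl.
by under [X in _ <= _ * X]eq_bigr => i ia do rewrite in_cons (negbTE ia) /=.
Qed.

Lemma posrep_symprod c (f : 'I_n -> V) :
  decomposable N P c -> posrep N P (symprod f) (K * c ^+ n * \prod_i N (f i)).
Proof.
move=> c_dec.
have /choice [yz yzP] : forall i, exists yz : V * V, [/\ P yz.1, P yz.2, f i = yz.1 - yz.2
    & N yz.1 + N yz.2 <= c * N (f i)].
  by move=> i; have [y [z yz]] := c_dec (f i); exists (y, z).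
have y_pos i : P (yz i).1 by case: (yzP i).
have z_pos i : P (yz i).2 by case: (yzP i).
have /funext -> : f =1 fun i => (yz i).1 - (yz i).2 by move=> i; case: (yzP i).
apply: posrep_le (posrep_symprodB y_pos z_pos).
rewrite -mulrA -[in c ^+ n](card_ord n) -prodr_const -big_split /= ler_wpM2l //.
by apply: ler_prod => i _; case: (yzP i) => _ _ <- ->; rewrite addr_ge0.
Qed.

Lemma posrep_sym c (x r : trep V n) : decomposable N P c -> tsymmetric x -> teq r x ->
  posrep N P x (K * c ^+ n * pi_cost N r).
Proof.
move=> c_dec x_sym rx; apply: posrep_teq (teq_tsymmetrize x_sym rx) _.
rewrite /pi_cost mulr_sumr; under eq_bigr do rewrite mulrCA.
exact: posrep_tsymmetrize (fun f => posrep_symprod f c_dec).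
Qed.

End FixedCost.

Lemma c_pisp_le_frame k c : norm_pisp NU PU (symprod e) = k%:E -> 0 <= c ->
  (forall c', c < c' -> decomposable N P c') -> (c_pisp N P n <= (k * c ^+ n)%:E)%E.
Proof.
move=> ek c0 dec.
have k0 : 0 <= k by rewrite -lee_fin -ek; apply: norm_pisp_ge0.
apply/ereal_supP => _ [x [x_sym _] <-].
have [p p0 xp] := norm_piE N_ge0 x; rewrite xp /=.
suff x_le : (norm_pisp N P x <= (k * c ^+ n * p)%:E)%E.
  have [->|p_nz] := eqVneq p 0; first by rewrite invr0 mule0 lee_fin mulr_ge0 ?exprn_ge0.
  apply: le_trans (lee_wpmul2r _ x_le) _; first by rewrite lee_fin invr_ge0.
  by rewrite -EFinM lee_fin mulfK.
(* slack [d] in kappa, in c_+ and in the projective norm, then [d] --> 0 *)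
have poly_cvg : (k + d) * (c + d) ^+ n * (p + d) @[d --> 0^'+] --> k * c ^+ n * p.
  apply: cvg_at_right_filter.
  have shift (a : R) : a + d @[d --> 0] --> a.
    by rewrite -[X in _ --> X]addr0; apply: cvgD; [exact: cvg_cst | exact: cvg_id].
  apply: cvgM; [apply: cvgM|] => //.
  by apply: (continuous_cvg _ (h := fun x : R => x ^+ n)) => //; exact: exprn_continuous.
apply: (lee_cvgr poly_cvg); near=> d.
have d0 : 0 < d by near: d; exact: nbhs_right_gt.
have eK : posrep NU PU (symprod e) (k + d).
  by apply: posrep_of_norm_pisp_lt; rewrite ek lte_fin ltrDl.
have [r rx rp] : exists2 r, teq r x & pi_cost N r <= p + d.
  by apply: pi_cost_of_norm_pi_lt; rewrite xp lte_fin ltrDl.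
have cd_dec : decomposable N P (c + d) by apply: dec; rewrite ltrDl.
apply: le_trans (norm_pisp_le (posrep_sym eK cd_dec x_sym rx)) _.
by rewrite lee_fin ler_wpM2l // mulr_ge0 ?exprn_ge0 ?addr_ge0 // ltW.
Unshelve. all: by end_near.
Qed.

End UpperBound.

Section LowerBound.
Variables (R : realType) (V : lmodType R) (N : V -> R) (P : set V) (n : nat).
Variables (e : 'I_n -> V) (ell : 'I_n -> V -> R).
Hypothesis ell_lin : forall j a x y, ell j (a *: x + y) = a * ell j x + ell j y.
Hypothesis ell_e : forall i j, ell j (e i) = (i == j)%:R.
Hypothesis ell_norm : forall w, \sum_j `|ell j w| <= N w.
Hypothesis e_norm : forall i, N (e i) <= 1.

Let N_ge0 w : 0 <= N w := le_trans (sumr_ge0 _ (fun j _ => normr_ge0 (ell j w))) (ell_norm w).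

Definition coord_permanent (f : 'I_n -> V) : R :=
  \sum_(F : {ffun 'I_n -> 'I_n}) (injectiveb F)%:R * \prod_i ell (F i) (f i).

Lemma coord_permanent_multilinear : multilinear coord_permanent.
Proof.
move=> f i a x y; rewrite /coord_permanent mulr_sumr -big_split; apply: eq_bigr => F _ /=.
have fupdE z : \prod_j ell (F j) (fupd f i z j) =
    ell (F i) z * \prod_(j | j != i) ell (F j) (f j).
  by rewrite (bigD1 i) //= fupd_eq; congr (_ * _); apply: eq_bigr => j ji; rewrite fupd_neq.
by rewrite !fupdE ell_lin; ring.
Qed.

Lemma coord_permanent_e (s : 'S_n) : coord_permanent (fun i => e (s i)) = 1.
Proof.
have s_inj : injectiveb [ffun i => s i].
  by apply/injectiveP => i j; rewrite !ffunE; apply: perm_inj.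
rewrite /coord_permanent (bigD1 [ffun i => s i]) //= s_inj mul1r.
rewrite big1 => [|i _]; last by rewrite ffunE ell_e eqxx.
rewrite big1 ?addr0 // => F F_s.
have [i Fi] : exists i, F i != s i.
  by apply/existsP; apply: contraR F_s => /existsPn Fs; apply/eqP/ffunP => i; rewrite ffunE; apply/eqP/negPn.
by rewrite (bigD1 i) //= ell_e eq_sym (negbTE Fi) mul0r mulr0.
Qed.

Lemma teval_coord_permanent : teval coord_permanent (symprod e) = 1.
Proof. by rewrite teval_symprod; under eq_bigr do rewrite coord_permanent_e; exact: perm_mean_cst. Qed.

Lemma coord_permanent_le f : `|coord_permanent f| <= \prod_i N (f i).
Proof.
apply: le_trans (ler_norm_sum _ _ _) _.
apply: (@le_trans _ _ (\sum_(F : {ffun 'I_n -> 'I_n}) \prod_i `|ell (F i) (f i)|)).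
  apply: ler_sum => F _; rewrite normrM normr_prod.
  by case: (injectiveb F); rewrite ?normr1 ?mul1r ?normr0 ?mul0r ?prodr_ge0.
rewrite -(bigA_distr_bigA (fun i j => `|ell j (f i)|)) /=.
by apply: ler_prod => i _; rewrite sumr_ge0 //= ell_norm.
Qed.

Lemma norm_pi_symprod_e : norm_pi N (symprod e) = 1%:E.
Proof.
apply/eqP; rewrite eq_le; apply/andP; split.
  apply: ge_ereal_inf; exists (pi_cost N (symprod e))%:E; first by exists (symprod e).
  rewrite lee_fin /pi_cost /symprod big_map big_enum /= -[leRHS](perm_mean_cst n) mulr_sumr.
  apply: ler_sum => s _; rewrite ger0_norm ?invr_ge0 // ler_wpM2l ?invr_ge0 //.
  by apply: prodr_ile1 => i _; rewrite N_ge0 e_norm.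
apply/ereal_infP => _ [r rx <-]; rewrite lee_fin.
have r1 : teval coord_permanent r = 1.
  by rewrite (rx _ coord_permanent_multilinear) teval_coord_permanent.
rewrite -{1}r1; apply: le_trans (ler_norm _) (le_trans (ler_norm_sum _ _ _) _).
apply: ler_sum => p _.
by rewrite normrM ler_wpM2l ?coord_permanent_le.
Qed.

Lemma norm_pisp_le_c_pisp : (norm_pisp N P (symprod e) <= c_pisp N P n)%E.
Proof.
apply: ereal_sup_ubound; exists (symprod e); last by rewrite norm_pi_symprod_e /= invr1 mule1.
split; first exact: symprod_sym.
by move/(_ _ coord_permanent_multilinear); rewrite teval_coord_permanent /teval big_nil; apply/eqP; rewrite oner_eq0.
Qed.

End LowerBound.

Lemma decomposable_le (R : realType) (V : lmodType R) (N : V -> R) (P : set V) c c' :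
  (forall x, 0 <= N x) -> c <= c' -> decomposable N P c -> decomposable N P c'.
Proof.
move=> N_ge0 cc' c_dec x; have [y [z [yP zP xE yz]]] := c_dec x.
by exists y, z; split => //; apply: le_trans yz _; rewrite ler_wpM2r.
Qed.

Section L1Space.
Variable R : realType.
Implicit Types u v : l1 R.

Definition l1psum u (N : nat) : R := \sum_(k < N) `|l1val u k|.

Lemma l1psum_ge0 u N : 0 <= l1psum u N.
Proof. exact: sumr_ge0. Qed.

Lemma l1psum_homo u : {homo l1psum u : M N / (M <= N)%N >-> M <= N}.
Proof.
move=> M N MN; rewrite /l1psum (big_ord_widen N (fun k => `|l1val u k|) MN).
by rewrite [leRHS](bigID (fun k : 'I_N => (k < M)%N)) /= lerDl sumr_ge0.
Qed.

Lemma l1normE u : l1norm u = limn (l1psum u).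
Proof. by rewrite /l1norm (_ : series _ = l1psum u) // funeqE => N; rewrite /series /= big_mkord. Qed.

Lemma cvgn_l1psum u : cvgn (l1psum u).
Proof.
apply: nondecreasing_is_cvgn; first exact: l1psum_homo.
by have /asboolP [M uM] := l1valP u; exists M => _ [N _ <-]; exact: uM.
Qed.

Lemma l1psum_le_l1norm u N : l1psum u N <= l1norm u.
Proof. by rewrite l1normE; apply: nondecreasing_cvgn_le; [exact: l1psum_homo | exact: cvgn_l1psum]. Qed.

Lemma l1norm_le u B : (forall N, l1psum u N <= B) -> l1norm u <= B.
Proof. by move=> uB; rewrite l1normE; apply: limr_le; [exact: cvgn_l1psum | exact: nearW]. Qed.

Lemma l1norm_ge0 u : 0 <= l1norm u.
Proof. exact: le_trans (l1psum_ge0 u 0) (l1psum_le_l1norm u 0). Qed.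

Lemma l1normD u v : l1norm (u + v) <= l1norm u + l1norm v.
Proof.
apply: l1norm_le => N; apply: le_trans (lerD (l1psum_le_l1norm u N) (l1psum_le_l1norm v N)).
by rewrite /l1psum -big_split; apply: ler_sum => k _; apply: ler_normD.
Qed.

Lemma l1psumZ a u N : l1psum (a *: u) N = `|a| * l1psum u N.
Proof. by rewrite /l1psum mulr_sumr; apply: eq_bigr => k _; rewrite -normrM. Qed.

Lemma l1normZ a u : l1norm (a *: u) = `|a| * l1norm u.
Proof.
rewrite !l1normE (_ : l1psum _ = fun N => `|a| * l1psum u N); last exact/funext/l1psumZ.
by apply: cvg_lim => //; apply: cvgMl_tmp; exact: cvgn_l1psum.
Qed.

Lemma l1norm_eq0 u : l1norm u = 0 -> u = 0.
Proof.
move=> u0; apply: val_inj; apply: funext => k /=; apply/normr0_eq0/eqP.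
rewrite eq_le normr_ge0 andbT -u0; apply: le_trans (l1psum_le_l1norm u k.+1).
by rewrite /l1psum big_ord_recr /= lerDr sumr_ge0.
Qed.

Lemma l1norm_finite u m : (forall k, (m <= k)%N -> l1val u k = 0) -> l1norm u = l1psum u m.
Proof.
move=> u_supp; apply/eqP; rewrite eq_le l1psum_le_l1norm andbT; apply: l1norm_le => N.
have psumE M : (m <= M)%N -> l1psum u M = l1psum u m.
  move=> mM; rewrite /l1psum (big_ord_widen _ (fun k => `|l1val u k|) mM).
  rewrite (bigID (fun k : 'I_M => (k < m)%N)) /= [X in _ + X]big1 ?addr0 // => k.
  by rewrite -leqNgt => /u_supp ->; rewrite normr0.
by apply: le_trans (l1psum_homo u (leq_maxl N m)) _; rewrite psumE ?leq_maxr.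
Qed.

Lemma l1norm_e i : l1norm (l1e R i) = 1.
Proof.
rewrite (@l1norm_finite _ i.+1) => [|k ik]; last by rewrite /= gtn_eqF.
rewrite /l1psum big_ord_recr /= eqxx normr1 big1 ?add0r // => k _.
by rewrite /= ltn_eqF ?normr0.
Qed.

Lemma l1pred_dominated u (f : nat -> R) : (forall k, `|f k| <= `|l1val u k|) -> (f : nat -> R^o) \in @l1pred R.
Proof.
move=> fu; apply/asboolP; have /asboolP [M uM] := l1valP u.
by exists M => N; apply: le_trans (uM N); apply: ler_sum => k _.
Qed.

Lemma norm_funrposneg_le (f : nat -> R) k : `|f^\+ k| <= `|f k| /\ `|f^\- k| <= `|f k|.
Proof.
have := congr1 (@^~ k) (funrposDneg f); rewrite !fctE /= => <-.
by rewrite !ger0_norm ?funrpos_ge0 ?funrneg_ge0 // lerDl lerDr !(funrpos_ge0, funrneg_ge0).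
Qed.

Definition l1posp u : l1 R :=
  L1 (@l1pred_dominated u _ (fun k => (norm_funrposneg_le (l1val u) k).1)).
Definition l1negp u : l1 R :=
  L1 (@l1pred_dominated u _ (fun k => (norm_funrposneg_le (l1val u) k).2)).

Lemma l1_decomposable : decomposable (@l1norm R) (@l1pos R) 1.
Proof.
move=> u; exists (l1posp u), (l1negp u); split.
- exact: funrpos_ge0.
- exact: funrneg_ge0.
- by apply: val_inj; rewrite /= funrposBneg.
have psumE : l1psum (l1posp u) + l1psum (l1negp u) = l1psum u.
  apply/funext => N; rewrite !fctE /l1psum -big_split; apply: eq_bigr => k _ /=.
  rewrite [`|_^\+ _|]ger0_norm ?funrpos_ge0 // [`|_^\- _|]ger0_norm ?funrneg_ge0 //.
  exact: (congr1 (@^~ (k : nat)) (funrposDneg (l1val u))).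
by rewrite mul1r !l1normE -limD ?psumE //; exact: cvgn_l1psum.
Qed.

End L1Space.

Section L1n.
Variables (R : realType) (m : nat).
Local Notation N := (@l1n_norm R m).
Local Notation P := (@l1n_pos R m).
Implicit Types v w : 'rV[R]_m.

Lemma l1n_norm_ge0 v : 0 <= N v.
Proof. exact: sumr_ge0. Qed.

Lemma l1n_normD v w : N (v + w) <= N v + N w.
Proof. by rewrite /l1n_norm -big_split; apply: ler_sum => j _; rewrite mxE ler_normD. Qed.

Lemma l1n_normZ (a : R) v : N (a *: v) = `|a| * N v.
Proof. by rewrite /l1n_norm mulr_sumr; apply: eq_bigr => j _; rewrite mxE normrM. Qed.

Lemma l1n_norm_eq0 v : N v = 0 -> v = 0.
Proof. by move/psumr_eq0P => v0; apply/rowP => j; rewrite mxE; apply/normr0_eq0/v0. Qed.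

Lemma l1n_coord_le v j : `|v ord0 j| <= N v.
Proof. by rewrite /l1n_norm (bigD1 j) //= lerDl sumr_ge0. Qed.

Lemma l1n_norm_e i : N (l1n_e R i) = 1.
Proof.
rewrite /l1n_norm (bigD1 i) //= big1 => [|j ji]; last by rewrite mxE (negbTE ji) normr0.
by rewrite mxE !eqxx normr1 addr0.
Qed.

Lemma l1n_pos_add v w : P v -> P w -> P (v + w).
Proof. by move=> vP wP j; rewrite mxE addr_ge0. Qed.

Lemma l1n_pos_scale (a : R) v : 0 <= a -> P v -> P (a *: v).
Proof. by move=> a0 vP j; rewrite mxE mulr_ge0. Qed.

Lemma l1n_pos0 : P 0.
Proof. by move=> j; rewrite mxE. Qed.

Lemma l1n_decomposable : decomposable N P 1.
Proof.
move=> v; pose f j := v ord0 j.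
exists (\row_j f^\+ j), (\row_j f^\- j); split.
- by move=> j; rewrite mxE funrpos_ge0.
- by move=> j; rewrite mxE funrneg_ge0.
- by apply/rowP => j; rewrite !mxE -[LHS]/(f j) -[in LHS](funrposBneg f).
rewrite mul1r /l1n_norm -big_split le_eqVlt; apply/orP; left; apply/eqP.
apply: eq_bigr => j _; rewrite !mxE ger0_norm ?funrpos_ge0 // ger0_norm ?funrneg_ge0 //.
exact: (congr1 (@^~ j) (funrposDneg f)).
Qed.

Definition l1_trunc (u : l1 R) : 'rV[R]_m := \row_j l1val u j.
Definition l1_ext v : l1 R := \sum_(j < m) v ord0 j *: l1e R j.

Lemma l1_trunc_lin a u u' : l1_trunc (a *: u + u') = a *: l1_trunc u + l1_trunc u'.
Proof. by apply/rowP => j; rewrite !mxE. Qed.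

Lemma l1_trunc_pos u : l1pos u -> P (l1_trunc u).
Proof. by move=> uP j; rewrite mxE. Qed.

Lemma l1_trunc_norm u : N (l1_trunc u) <= l1norm u.
Proof.
apply: le_trans (l1psum_le_l1norm u m); rewrite /l1n_norm /l1psum.
by apply: ler_sum => j _; rewrite mxE.
Qed.

Lemma l1_extE v k : l1val (l1_ext v) k = \sum_(j < m) v ord0 j * (k == j)%:R.
Proof.
rewrite /l1_ext; apply: (big_ind2 (fun (x : l1 R) y => l1val x k = y)) => //.
by move=> x1 x2 y1 y2 <- <-.
Qed.


Lemma l1_ext_lt v (j : 'I_m) : l1val (l1_ext v) j = v ord0 j.
Proof.
rewrite l1_extE (bigD1 j) //= eqxx mulr1 big1 ?addr0 // => i ij.
by rewrite (_ : (j == i :> nat) = false) ?mulr0 //; apply/negbTE; rewrite eq_sym.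
Qed.

Lemma l1_ext_ge v k : (m <= k)%N -> l1val (l1_ext v) k = 0.
Proof.
move=> mk; rewrite l1_extE big1 // => i _.
by rewrite gtn_eqF ?mulr0 // (leq_trans (ltn_ord i) mk).
Qed.

Lemma l1_ext_lin a v w : l1_ext (a *: v + w) = a *: l1_ext v + l1_ext w.
Proof.
rewrite /l1_ext scaler_sumr -big_split; apply: eq_bigr => j _ /=.
by rewrite !mxE scalerDl scalerA.
Qed.

Lemma l1_ext_pos v : P v -> l1pos (l1_ext v).
Proof. by move=> vP k; rewrite l1_extE sumr_ge0 // => j _; rewrite mulr_ge0. Qed.

Lemma l1_ext_norm v : l1norm (l1_ext v) <= N v.
Proof.
rewrite (l1norm_finite (l1_ext_ge v)) /l1psum /l1n_norm.
by apply: ler_sum => j _; rewrite l1_ext_lt.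
Qed.

Lemma norm_pisp_l1n_e n (nm : (n <= m)%N) :
  norm_pisp N P (symprod (fun i : 'I_n => l1n_e R (widen_ord nm i))) = kappa R n.
Proof.
have trunc_e (i : 'I_n) : l1_trunc (l1e R i) = l1n_e R (widen_ord nm i).
  by apply/rowP => j; rewrite !mxE eqxx.
have ext_e (i : 'I_n) : l1_ext (l1n_e R (widen_ord nm i)) = l1e R i.
  apply: val_inj; apply: funext => k /=; rewrite l1_extE (bigD1 (widen_ord nm i)) //=.
  rewrite mxE !eqxx mul1r big1 ?addr0 // => j ji.
  by rewrite mxE (negbTE ji) mul0r.
apply/eqP; rewrite eq_le; apply/andP; split.
  have := norm_pisp_tmap l1_trunc_lin l1_trunc_pos l1_trunc_norm l1n_norm_ge0 (symprod (fun i : 'I_n => l1e R i)).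
  by rewrite tmap_symprod; under eq_fun do rewrite trunc_e.
have := norm_pisp_tmap l1_ext_lin l1_ext_pos l1_ext_norm (@l1norm_ge0 R) (symprod (fun i : 'I_n => l1n_e R (widen_ord nm i))).
by rewrite tmap_symprod; under eq_fun do rewrite ext_e.
Qed.

End L1n.

Section PositiveDecomposition.
Variables (R : realType) (V : lmodType R) (N : V -> R) (P : set V).
Hypothesis N_tri : forall x y, N (x + y) <= N x + N y.
Hypothesis N_hom : forall (a : R) x, N (a *: x) = `|a| * N x.

Let N_ge0 := seminorm_ge0 N_tri N_hom.
Let N0 : N 0 = 0 := seminorm0 N_hom.

Lemma norm_le_norm_plus x : ((N x)%:E <= norm_plus N P x)%E.
Proof.
apply/ereal_infP => _ [[y z] [_ [_ ->]] <-]; rewrite lee_fin /=.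
by apply: le_trans (N_tri _ _) _; rewrite seminormN.
Qed.

Lemma c_plus_le c : 0 <= c -> decomposable N P c -> (c_plus N P <= c%:E)%E.
Proof.
move=> c0 c_dec; apply/ereal_supP => _ [x x1 <-]; have [y [z [yP zP xE yz]]] := c_dec x.
apply: ge_ereal_inf; exists (N y + N z)%:E; first by exists (y, z).
by rewrite lee_fin (le_trans yz) // ler_piMr.
Qed.

Lemma c_plus_ge x : N x <= 1 -> ((N x)%:E <= c_plus N P)%E.
Proof. by move=> x1; apply: le_trans (norm_le_norm_plus x) _; apply: ereal_sup_ubound; exists x. Qed.

Lemma c_plus_ge0 : (0 <= c_plus N P)%E.
Proof. by have := @c_plus_ge 0; rewrite N0 ler01; apply. Qed.

Hypothesis N_def : forall x, N x = 0 -> x = 0.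
Hypothesis P_scale : forall (a : R) x, 0 <= a -> P x -> P (a *: x).
Hypothesis P_0 : P 0.

(* a decomposition of [x / N x] with cost below [c'] is rescaled to one of [x] *)
Lemma decomposable_c_plus c c' : c_plus N P = c%:E -> c < c' -> decomposable N P c'.
Proof.
move=> cE cc' x; have [Nx0|Nx_neq0] := eqVneq (N x) 0.
  by rewrite (N_def Nx0); exists 0, 0; rewrite subr0 N0 addr0 mulr0.
have Nx_gt0 : 0 < N x by rewrite lt_def Nx_neq0 N_ge0.
have x1 : N ((N x)^-1 *: x) <= 1 by rewrite N_hom ger0_norm ?invr_ge0 ?N_ge0 // mulVf.
have /ereal_inf_lt [_ [[y z] [yP [zP xE]] <-]] : (norm_plus N P ((N x)^-1 *: x) < c'%:E)%E.
  apply: le_lt_trans (_ : c_plus N P < _)%E; last by rewrite cE lte_fin.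
  by apply: ereal_sup_ubound; exists ((N x)^-1 *: x).
rewrite lte_fin /= => yz.
exists (N x *: y), (N x *: z); split; try exact: P_scale.
  by rewrite -scalerBr -xE scalerA mulfV // scale1r.
by rewrite !N_hom ger0_norm ?N_ge0 // -mulrDr mulrC ler_wpM2r // ltW.
Qed.

End PositiveDecomposition.

Section L1nOrdered.
Variables (R : realType) (m : nat).
Hypothesis m_gt0 : (0 < m)%N.
Local Notation N := (@l1n_norm R m).
Local Notation P := (@l1n_pos R m).

Let N_tri := @l1n_normD R m.
Let N_hom := @l1n_normZ R m.

Lemma l1n_c_plus : c_plus N P = 1%E.
Proof.
apply/eqP; rewrite eq_le (c_plus_le ler01 (@l1n_decomposable R m)) /=.
by have := c_plus_ge P N_tri N_hom (x := l1n_e R (Ordinal m_gt0)); rewrite l1n_norm_e; apply.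
Qed.

Lemma l1n_closed (u : nat -> 'rV[R]_m) x : (forall k, P (u k)) ->
  (fun k => N (u k - x)) @ \oo --> (0 : R) -> P x.
Proof.
move=> uP ux j; rewrite leNgt; apply/negP => xj.
have xj' : 0 < - x ord0 j by rewrite oppr_gt0.
move/cvgrPdist_lt: ux => /(_ _ xj') [k _ /(_ k (leqnn k))] /=.
rewrite sub0r normrN ger0_norm ?l1n_norm_ge0 //.
have := le_trans (ler_norm _) (l1n_coord_le (u k - x) j); rewrite !mxE.
by have := uP k j; lra.
Qed.

Lemma l1n_ordered_normed_space : ordered_normed_space N P.
Proof.
split; first exact: N_tri.
split; first exact: N_hom.
split; first exact: l1n_norm_eq0.
split; first exact: l1n_pos_add.
split; first exact: l1n_pos_scale.
split.
  move=> x xP xN; apply/rowP => j; apply/eqP; rewrite mxE eq_le xP andbT.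
  by have := xN j; rewrite mxE oppr_ge0.
split; first exact: l1n_closed.
split; first by move=> x; have [y [z [yP zP xE _]]] := l1n_decomposable x; exists y, z.
by rewrite l1n_c_plus ltey.
Qed.

End L1nOrdered.

Section OrderedNormedSpace.
Variables (R : realType) (V : lmodType R) (N : V -> R) (P : set V).
Hypothesis ons : ordered_normed_space N P.

Lemma ons_c_plusE : exists2 c, 0 <= c & c_plus N P = c%:E.
Proof.
have [N_tri [N_hom [_ [_ [_ [_ [_ [_ c_fin]]]]]]]] := ons.
move: (c_plus_ge0 P N_tri N_hom) c_fin; case: (c_plus N P) => [c| |] //.
by rewrite lee_fin; exists c.
Qed.

Lemma ons_decomposable c c' : c_plus N P = c%:E -> c < c' -> decomposable N P c'.
Proof.
have [N_tri [N_hom [N_def [_ [P_scale [_ [_ [P_gen _]]]]]]]] := ons.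
have P_0 : P 0 by have [y [_ [yP _ _]]] := P_gen 0; rewrite -(scale0r y); exact: P_scale.
exact: decomposable_c_plus.
Qed.

End OrderedNormedSpace.

Section Kappa.
Variables (R : realType) (n : nat).

Lemma kappa_ge0 : (0 <= kappa R n)%E.
Proof. exact: norm_pisp_ge0 (@l1norm_ge0 R) _. Qed.

Lemma le_kappa (x : \bar R) :
  (forall k, kappa R n = k%:E -> (x <= k%:E)%E) -> (x <= kappa R n)%E.
Proof. by move: kappa_ge0; case: (kappa R n) => [k _ /(_ k)->| _ _|] //; rewrite leey. Qed.

Section NormedCone.
Variables (V : lmodType R) (N : V -> R) (P : set V).
Hypothesis N_tri : forall x y, N (x + y) <= N x + N y.
Hypothesis N_hom : forall (a : R) x, N (a *: x) = `|a| * N x.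
Hypothesis N_def : forall x, N x = 0 -> x = 0.
Hypothesis P_add : forall x y, P x -> P y -> P (x + y).
Hypothesis P_scale : forall (a : R) x, 0 <= a -> P x -> P (a *: x).
Hypothesis P_0 : P 0.

Lemma c_pisp_le_kappa c k : 0 <= c -> (forall c', c < c' -> decomposable N P c') ->
  kappa R n = k%:E -> (c_pisp N P n <= (k * c ^+ n)%:E)%E.
Proof.
move=> c0 dec kE.
apply: (c_pisp_le_frame N_tri N_hom N_def P_add P_scale P_0
         (e := fun i => l1e R i) (ell := fun j u => l1val u j)) kE c0 dec => //.
- by move=> i j; rewrite /= eq_sym.
- by move=> w; apply: l1psum_le_l1norm.
Qed.

Lemma c_pisp_le_kappa1 : decomposable N P 1 -> (c_pisp N P n <= kappa R n)%E.
Proof.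
move=> dec1; apply: le_kappa => k kE; rewrite -[k]mulr1 -(expr1n _ n).
apply: c_pisp_le_kappa kE => // c' /ltW c'1.
exact: decomposable_le (seminorm_ge0 N_tri N_hom) c'1 dec1.
Qed.

End NormedCone.

Lemma c_pisp_l1 : c_pisp (@l1norm R) (@l1pos R) n = kappa R n.
Proof.
apply/eqP; rewrite eq_le; apply/andP; split.
  apply: c_pisp_le_kappa1 (@l1_decomposable R) => //.
  - exact: l1normD.
  - exact: l1normZ.
  - exact: l1norm_eq0.
  - by move=> x y xP yP k; exact: addr_ge0 (xP k) (yP k).
  - by move=> a x a0 xP k; exact: mulr_ge0 a0 (xP k).
apply: (norm_pisp_le_c_pisp _ (ell := fun j u => l1val u j)) => //.
- by move=> i j; rewrite /= eq_sym.
- by move=> w; apply: l1psum_le_l1norm.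
- by move=> i; rewrite l1norm_e.
Qed.

Lemma c_pisp_l1n m : (n <= m)%N -> c_pisp (@l1n_norm R m) (@l1n_pos R m) n = kappa R n.
Proof.
move=> nm; apply/eqP; rewrite eq_le; apply/andP; split.
  apply: c_pisp_le_kappa1 (@l1n_decomposable R m).
  - exact: l1n_normD.
  - exact: l1n_normZ.
  - exact: l1n_norm_eq0.
  - exact: l1n_pos_add.
  - exact: l1n_pos_scale.
  - exact: l1n_pos0.
rewrite -(norm_pisp_l1n_e R nm).
apply: (norm_pisp_le_c_pisp _ (e := fun i => l1n_e R (widen_ord nm i))
  (ell := fun j v => v ord0 (widen_ord nm j))).
- by move=> j a x y; rewrite !mxE.
- by move=> i j; rewrite mxE eqxx /= eq_sym.
- move=> w; rewrite /l1n_norm -(big_ord_narrow (F := fun j => `|w ord0 j|) nm).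
  by rewrite [leRHS](bigID (fun j : 'I_m => (j < n)%N)) /= lerDl sumr_ge0.
- by move=> i; rewrite l1n_norm_e.
Qed.

Lemma ons_c_pisp_le (V : lmodType R) (N : V -> R) (P : set V) c k :
  ordered_normed_space N P -> c_plus N P = c%:E -> kappa R n = k%:E ->
  (c_pisp N P n <= (k * c ^+ n)%:E)%E.
Proof.
move=> ons cE kE; have [N_tri [N_hom [N_def [P_add [P_scale [_ [_ [P_gen _]]]]]]]] := ons.
have P_0 : P 0 by have [y [_ [yP _ _]]] := P_gen 0; rewrite -(scale0r y); exact: P_scale.
have c0 : 0 <= c by rewrite -lee_fin -cE; exact: c_plus_ge0.
exact: c_pisp_le_kappa c0 (fun c' => ons_decomposable ons cE) kE.
Qed.

Hypothesis n_gt0 : (0 < n)%N.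

Lemma sup_cplus1E : sup_cplus1 R n = kappa R n.
Proof.
apply/eqP; rewrite eq_le; apply/andP; split.
  apply/ereal_supP => _ [V [N [P [ons c1 ->]]]]; apply: le_kappa => k kE.
  by rewrite -[k]mulr1 -(expr1n _ n); apply: ons_c_pisp_le ons c1 kE.
apply: ereal_sup_ubound; exists ('rV[R]_n : lmodType R), (@l1n_norm R n), (@l1n_pos R n).
by rewrite l1n_c_plus // c_pisp_l1n //; split => //; exact: l1n_ordered_normed_space.
Qed.

Lemma sup_ratioE : sup_ratio R n = kappa R n.
Proof.
apply/eqP; rewrite eq_le; apply/andP; split.
  apply/ereal_supP => _ [V [N [P [ons ->]]]]; apply: le_kappa => k kE.
  have [c c0 cE] := ons_c_plusE ons; rewrite cE /=.
  (* the junk value [0^-1 = 0] makes the ratio vanish when [c_+(E) = 0] *)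
  have [->|c_neq0] := eqVneq c 0.
    by rewrite expr0n gtn_eqF // invr0 mule0 -kE kappa_ge0.
  apply: le_trans (lee_wpmul2r _ (ons_c_pisp_le ons cE kE)) _.
    by rewrite lee_fin invr_ge0 exprn_ge0.
  by rewrite -EFinM lee_fin mulfK // expf_neq0.
apply: ereal_sup_ubound; exists ('rV[R]_n : lmodType R), (@l1n_norm R n), (@l1n_pos R n).
split; first exact: l1n_ordered_normed_space.
by rewrite l1n_c_plus // expr1n invr1 mule1 c_pisp_l1n.
Qed.

End Kappa.

Theorem theorem5p1 (R : realType) (n : nat) : (1 <= n)%N ->
  (* kappa(n) = || e_1 v ... v e_n ||_{pi s+, l_1^n} *)
  kappa R n = norm_pisp (@l1n_norm R n) (@l1n_pos R n)
                        (symprod (fun i : 'I_n => l1n_e R i)) /\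
  (* c_{pi,s+}(n, l_1^m) = kappa(n) for every finite m >= n *)
  (forall m : nat, (n <= m)%N ->
     c_pisp (@l1n_norm R m) (@l1n_pos R m) n = kappa R n) /\
  (* ... and for m = infinity *)
  c_pisp (@l1norm R) (@l1pos R) n = kappa R n /\
  (* the chain of equalities *)
  sup_ratio R n = sup_cplus1 R n /\
  sup_cplus1 R n = c_pisp (@l1norm R) (@l1pos R) n /\
  c_pisp (@l1norm R) (@l1pos R) n = c_pisp (@l1n_norm R n) (@l1n_pos R n) n /\
  c_pisp (@l1n_norm R n) (@l1n_pos R n) n = kappa R n.
Proof.
move=> n_gt0; have l1n_kappa := c_pisp_l1n R (leqnn n).
split.
  by rewrite -(norm_pisp_l1n_e R (leqnn n)); congr (norm_pisp _ _ (symprod _)).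
split; first exact: c_pisp_l1n.
by rewrite sup_ratioE // sup_cplus1E // c_pisp_l1 l1n_kappa.
Qed.
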